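(* Let $(k_n)$ be a sequence of positive integers with $k_n\ll n$ (i.e. $k_n/n\to0$). Let $G_n$ be the Erdős–Rényi random graph on $\mathcal C^0_n$ with any edge probability $p_n\in(0,1)$, $R_n$ its associated reaction network, and let $A_n$ be the event that every reaction vector $y'-y$ of $R_n$ has exactly $4$ non-zero components. Then for all sufficiently large $n$, \[ \mathbb P(A_n\mid R_n\text{ is }k_n\text{-paired})\ge 1-\frac{21k_n}{n}. \]
   Context: Let $e_i$ be the $i$-th standard basis vector of $\mathbb Z^n$ and $\mathcal C^0_n=\{0\}\cup\{e_i:1\le i\le n\}\cup\{e_i+e_j:1\le i\le j\le n\}$, so $N_n=|\mathcal C^0_n|=\frac{n^2+3n+2}{2}$. $G_n$ is the Erdős–Rényi random graph on vertex set $\mathcal C^0_n$ in which each of the $\binom{N_n}{2}$ possible undirected edges is present independently with probability $p_n$. The associated reaction network $R_n$ has species $S_1,\dots,S_n$, complex set equal to the set of vertices of $G_n$ of positive degree, and for each edge $\{y,y'\}$ of $G_n$ the two reactions $y\to y'$ and $y'\to y$. A reaction network is paired if each connected component of its graph contains exactly two complexes, and $i$-paired if it is paired with exactly $i$ connected components; thus $R_n$ is $k$-paired exactly when $G_n$ is a matching with $k$ edges (plus isolated vertices). Conditioned on $R_n$ being $k_n$-paired, $G_n$ is uniformly distributed over all such matchings. *)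

From HB Require Import structures.
From mathcomp Require Import all_boot all_order all_algebra.
Set Implicit Arguments. Unset Strict Implicit. Unset Printing Implicit Defensive.
Import Order.TTheory GRing.Theory Num.Theory.

(* Candidate complexes: vectors in {0,1,2}^n, viewed as elements of Z^n
   (entries of every element of C^0_n lie in {0,1,2}). *)
Notation vert n := {ffun 'I_n -> 'I_3}.

Definition isC0 n (v : vert n) : bool :=
  [|| [forall l, (v l : nat) == 0%N],
      [exists i : 'I_n, [forall l, (v l : nat) == (l == i) :> nat]]
    | [exists i : 'I_n, [exists j : 'I_n,
         (i <= j)%N && [forall l, (v l : nat) == ((l == i) + (l == j))%N]]]].

Definition C0 n : {set vert n} := [set v | isC0 v].

Definition pairs n : {set {set vert n}} :=
  [set e : {set vert n} | (e \subset C0 n) && (#|e| == 2%N)].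

(* A graph on C^0_n is an edge set E \subset pairs n. *)
Definition adj n (E : {set {set vert n}}) : rel (vert n) :=
  fun x y => [set x; y] \in E.

(* complexes of the associated reaction network: vertices of positive degree *)
Definition complexes n (E : {set {set vert n}}) : {set vert n} :=
  [set x | [exists y, adj E x y]].

Definition comp n (E : {set {set vert n}}) (x : vert n) : {set vert n} :=
  [set y | connect (adj E) x y].

Definition components n (E : {set {set vert n}}) : {set {set vert n}} :=
  [set comp E x | x in complexes E].

Definition paired n (E : {set {set vert n}}) : bool :=
  [forall C in components E, #|C| == 2%N].

Definition ipaired n (i : nat) (E : {set {set vert n}}) : bool :=
  paired E && (#|components E| == i).

Definition eventA n (E : {set {set vert n}}) : bool :=
  [forall e in E, forall y in e, forall y' in e,
     (y != y') ==> (#|[set i | y i != y' i]| == 4%N)].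

Local Open Scope ring_scope.

Definition erw (R : realFieldType) n (p : R) (E : {set {set vert n}}) : R :=
  p ^+ #|E| * (1 - p) ^+ (#|pairs n| - #|E|).

Definition ERprob (R : realFieldType) n (p : R) (A : pred {set {set vert n}}) : R :=
  \sum_(E in powerset (pairs n) | A E) erw p E.

Definition ERcond (R : realFieldType) n (p : R)
    (A B : pred {set {set vert n}}) : R :=
  ERprob p (fun E => A E && B E) / ERprob p B.

(* Conditioned on being k-paired, the graph is a uniform random k-matching on C^0_n.
   An edge {e_a + e_b, e_c + e_d} with {a, b} and {c, d} disjoint has a reaction vector
   with four non-zero entries, so every bad edge either has an end among the 2n + 1
   complexes 0, e_i, 2 e_i, or joins e_a + e_b to e_a + e_c: there are
   O(n^3) bad edges among the ~n^4/8 possible ones.  Permutations of C^0_n act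
   transitively on edges and preserve k-matchings, so every edge lies in the same
   number of k-matchings; hence a uniform k-matching meets a bad edge with probability
   at most k |bad| / |edges| <= 21 k / n as soon as n >= 20. *)

From Pilot Require Import Defs.
From HB Require Import structures.
From mathcomp Require Import all_boot all_order all_algebra.
From mathcomp Require Import perm zify ring lra.
Import Order.TTheory GRing.Theory Num.Theory.
Set Implicit Arguments. Unset Strict Implicit. Unset Printing Implicit Defensive.

Lemma card2_set2 (T : finType) (e : {set T}) x :
  #|e| = 2 -> x \in e -> exists2 y, y != x & e = [set x; y].
Proof.
move=> /eqP /cards2P [a [b [ab ->]]] /set2P [->|->].
  by exists b; rewrite // eq_sym.
by exists a; rewrite // setUC.
Qed.

Lemma sum_card_setI (T : finType) (M : {set {set T}}) (S : {set T}) :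
  \sum_(E in M) #|E :&: S| = \sum_(e in S) #|[set E in M | e \in E]|.
Proof.
have cardI E : #|E :&: S| = \sum_(e in S) (e \in E : nat).
  rewrite -sum1_card big_mkcond [RHS]big_mkcond; apply: eq_bigr => e _.
  by rewrite inE andbC; case: (e \in S); case: (e \in E).
under eq_bigr do rewrite cardI.
rewrite exchange_big; apply: eq_bigr => e _.
rewrite -sum1_card [RHS]big_mkcond [LHS]big_mkcond; apply: eq_bigr => E _.
by rewrite inE; case: (E \in M); case: (e \in E).
Qed.

Section Matchings.

Variable T : finType.
Implicit Types (V e : {set T}) (E : {set {set T}}).

Definition edges V := [set e : {set T} | (e \subset V) && (#|e| == 2)].

Definition matching E :=
  [forall e in E, forall e' in E, (e != e') ==> [disjoint e & e']].

Definition kmatchings V k :=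
  [set E in powerset (edges V) | matching E && (#|E| == k)].

Definition edge_freq V k e := #|[set E in kmatchings V k | e \in E]|.

Lemma card_edge V e : e \in edges V -> #|e| = 2.
Proof. by rewrite inE => /andP [_ /eqP]. Qed.

Lemma matchingP E e e' x :
  matching E -> e \in E -> e' \in E -> x \in e -> x \in e' -> e = e'.
Proof.
move=> /forall_inP M eE e'E xe xe'; apply/eqP/negPn/negP => ne.
have /forall_inP /(_ e' e'E) /implyP /(_ ne) := M e eE.
by move/disjoint_setI0/setP/(_ x); rewrite !inE xe xe'.
Qed.

Lemma matching_imset (f : T -> T) E : injective f ->
  matching E -> matching [set f @: e | e : {set T} in E].
Proof.
move=> injf M; apply/forall_inP => _ /imsetP [e eE ->].
apply/forall_inP => _ /imsetP [e' e'E ->]; apply/implyP => ne.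
have {ne} ne : e != e' by apply: contra ne => /eqP ->.
have /forall_inP /(_ e' e'E) /implyP /(_ ne) := forall_inP M e eE.
by rewrite -!setI_eq0 -imsetI => [/eqP ->|x y _ _ /injf]; rewrite ?imset0.
Qed.

Section Symmetry.

Variables (V : {set T}) (s : {perm T}).
Hypothesis sV : forall x, (s x \in V) = (x \in V).

Lemma edges_perm e : e \in edges V -> s @: e \in edges V.
Proof.
rewrite !inE card_imset; last exact: perm_inj.
case/andP=> /subsetP eV ->; rewrite andbT.
by apply/subsetP => _ /imsetP [x xe ->]; rewrite sV eV.
Qed.

Lemma kmatchings_perm k E : E \in kmatchings V k ->
  [set s @: e | e : {set T} in E] \in kmatchings V k.
Proof.
rewrite !inE card_imset; last exact/imset_inj/perm_inj.
case/and3P=> /subsetP EV M ->; rewrite matching_imset ?andbT //; last exact: perm_inj.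
by apply/subsetP => _ /imsetP [e eE ->]; rewrite edges_perm ?EV.
Qed.

Lemma edge_freq_perm k e : edge_freq V k e <= edge_freq V k (s @: e).
Proof.
rewrite /edge_freq -(card_imset _ (imset_inj (imset_inj (@perm_inj _ s)))).
apply/subset_leq_card/subsetP => F /imsetP [E]; rewrite inE => /andP [EM eE] ->.
by rewrite inE kmatchings_perm //=; apply/imsetP; exists e.
Qed.

End Symmetry.

Lemma tperm_stable V a b x : a \in V -> b \in V ->
  (tperm a b x \in V) = (x \in V).
Proof. by move=> aV bV; case: tpermP => // ->; rewrite aV bV. Qed.

(* Two transpositions carry {a, b} onto {c, d}: first a to c, then the image of b to d. *)
Lemma edges_transitive V e e' : e \in edges V -> e' \in edges V ->
  exists2 s : {perm T}, (forall x, (s x \in V) = (x \in V)) & s @: e = e'.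
Proof.
rewrite !inE => /andP [/subsetP eV /cards2P [a [b [ab de]]]].
case/andP=> /subsetP e'V /cards2P [c [d [cd de']]].
have [aV bV] : a \in V /\ b \in V by rewrite !eV // de !inE eqxx ?orbT.
have [cV dV] : c \in V /\ d \in V by rewrite !e'V // de' !inE eqxx ?orbT.
pose b' := tperm a c b.
have b'V : b' \in V by rewrite tperm_stable.
exists (tperm a c * tperm b' d)%g => [x|]; first by rewrite permM !tperm_stable.
have cb' : c != b' by rewrite /b' -{1}(tpermL a c) (inj_eq perm_inj).
by rewrite de de' imsetU1 imset_set1 !permM tpermL -/b' tpermL tpermD // eq_sym.
Qed.

Lemma edge_freq_const V k e e' : e \in edges V -> e' \in edges V ->
  edge_freq V k e = edge_freq V k e'.
Proof.
have le_freq f f' : f \in edges V -> f' \in edges V -> edge_freq V k f <= edge_freq V k f'.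
  by move=> fV f'V; have [s sV <-] := edges_transitive fV f'V; apply: edge_freq_perm.
by move=> eV e'V; apply/eqP; rewrite eqn_leq !le_freq.
Qed.

Lemma sum_edge_freq V k :
  \sum_(e in edges V) edge_freq V k e = k * #|kmatchings V k|.
Proof.
rewrite -sum_card_setI mulnC -sum_nat_const; apply: eq_bigr => E.
by rewrite !inE => /and3P [/setIidPl -> _ /eqP].
Qed.

Lemma card_kmatchings_meet V k (S : {set {set T}}) : S \subset edges V ->
  #|[set E in kmatchings V k | E :&: S != set0]| * #|edges V|
    <= #|S| * (k * #|kmatchings V k|).
Proof.
move=> /subsetP SV; set M := kmatchings V k.
have meet_le : #|[set E in M | E :&: S != set0]| <= \sum_(E in M) #|E :&: S|.
  rewrite -sum1_card [X in X <= _]big_mkcond [X in _ <= X]big_mkcond /=.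
  apply: leq_sum => E _; rewrite inE; case: (E \in M) => //=.
  by case: ifP => // ne0; rewrite card_gt0.
apply: leq_trans (leq_mul meet_le (leqnn _)) _.
rewrite sum_card_setI big_distrl /= -sum_nat_const -sum_edge_freq.
apply: leq_sum => e eS; rewrite mulnC -sum_nat_const.
by apply/eq_leq/eq_bigr => e' e'V; rewrite (edge_freq_const k e'V (SV e eS)).
Qed.

End Matchings.

Section ReactionGraph.

Variables (n : nat) (E : {set {set vert n}}).
Hypothesis E_pairs : E \subset pairs n.

Lemma card_pairs_mem e : e \in E -> #|e| = 2.
Proof. by move/(subsetP E_pairs)/card_edge. Qed.

Lemma adj_edge e x : e \in E -> x \in e -> exists2 y, y != x & adj E x y.
Proof.
move=> eE xe; have [y yx de] := card2_set2 (card_pairs_mem eE) xe.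
by exists y; rewrite // /adj -de.
Qed.

Lemma complexesP x : reflect (exists2 e, e \in E & x \in e) (x \in complexes E).
Proof.
rewrite inE; apply: (iffP existsP) => [[y xy]|[e eE xe]].
  by exists [set x; y]; rewrite ?set21.
by have [y _ xy] := adj_edge eE xe; exists y.
Qed.

Lemma comp_matching e x : matching E -> e \in E -> x \in e -> Defs.comp E x = e.
Proof.
move=> M eE xe; apply/setP => y; rewrite inE; apply/idP/idP => [|ye].
  have closed_e : closed (adj E) e.
    move=> u v uvE; have u_uv := set21 u v; have v_uv := set22 u v.
    apply/idP/idP => [ue|ve].
      by rewrite (matchingP M eE uvE ue u_uv).
    by rewrite (matchingP M eE uvE ve v_uv).
  by move/(closed_connect closed_e) <-.
have [z _ de] := card2_set2 (card_pairs_mem eE) xe.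
move: ye; rewrite de => /set2P [->|->]; first exact: connect0.
by apply: connect1; rewrite /adj -de.
Qed.

Lemma components_matching : matching E -> components E = E.
Proof.
move=> M; apply/setP => C; apply/imsetP/idP => [[x /complexesP [e eE xe] ->]|CE].
  by rewrite (comp_matching M eE xe).
have /eqP /cards2P [x [y [_ dC]]] := card_pairs_mem CE.
have xC : x \in C by rewrite dC set21.
exists x; first by apply/complexesP; exists C.
by rewrite (comp_matching M CE xC).
Qed.

(* A complex lying on two distinct reactions has at least three complexes in its component. *)
Lemma paired_matching : paired E -> matching E.
Proof.
move=> /forall_inP P; apply/forall_inP => e eE; apply/forall_inP => e' e'E.
apply/implyP => ne; rewrite -setI_eq0; apply/set0Pn => -[x]; rewrite inE => /andP [xe xe'].
have [y yx de] := card2_set2 (card_pairs_mem eE) xe.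
have [z zx de'] := card2_set2 (card_pairs_mem e'E) xe'.
have yz : y != z by apply: contra ne => /eqP yz; rewrite de de' yz.
have xC : x \in complexes E by apply/complexesP; exists e.
have /P /eqP comp2 : Defs.comp E x \in components E by apply: imset_f.
have sub3 : x |: [set y; z] \subset Defs.comp E x.
  apply/subsetP => w; rewrite !inE => /or3P [] /eqP ->.
  - exact: connect0.
  - by apply: connect1; rewrite /adj -de.
  - by apply: connect1; rewrite /adj -de'.
have := subset_leq_card sub3; rewrite comp2 cardsU1 cards2 yz !inE negb_or.
by rewrite eq_sym yx eq_sym zx.
Qed.

Lemma ipaired_matching k : ipaired k E = matching E && (#|E| == k).
Proof.
apply/andP/andP => [[/paired_matching M]|[M]]; rewrite components_matching //.
split=> //; apply/forall_inP => C; rewrite components_matching // => CE.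
by rewrite card_pairs_mem.
Qed.

End ReactionGraph.

Section Complexes.

Variable n : nat.

(* [inord] truncates: only functions with values at most 2 are represented faithfully. *)
Definition vec (f : 'I_n -> nat) : vert n := [ffun l => inord (f l)].

Lemma vecE f l : f l <= 2 -> (vec f l : nat) = f l.
Proof. by move=> fl; rewrite ffunE inordK. Qed.

Lemma vec_eq (v : vert n) f : (forall l, (v l : nat) = f l) -> v = vec f.
Proof.
move=> vf; apply/ffunP => l; apply: ord_inj.
by rewrite vecE -vf // -ltnS ltn_ord.
Qed.

Definition scaled_unit c (i : 'I_n) : vert n := vec (fun l => (l == i) * c).

Definition indicator (A : {set 'I_n}) : vert n := vec (fun l => l \in A).

Definition mixed : {set vert n} :=
  [set indicator A | A in [set A : {set 'I_n} | #|A| == 2]].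

Definition pure : {set vert n} := C0 n :\: mixed.

Lemma scaled_unitE c i l : c <= 2 -> (scaled_unit c i l : nat) = (l == i) * c.
Proof. by move=> c2; rewrite /scaled_unit vecE //; case: (l == i); rewrite ?mul1n. Qed.

Lemma indicatorE A l : (indicator A l : nat) = (l \in A).
Proof. by rewrite /indicator vecE //; case: (l \in A). Qed.

Lemma indicator_inj : injective indicator.
Proof.
move=> A B /ffunP AB; apply/setP => l; move: (congr1 val (AB l)).
by rewrite /= !indicatorE; case: (l \in A); case: (l \in B).
Qed.

Lemma unit_C0 i : scaled_unit 1 i \in C0 n.
Proof.
rewrite inE; apply/or3P/Or32/existsP; exists i; apply/forallP => l.
by rewrite scaled_unitE ?muln1.
Qed.

Lemma double_unit_C0 i : scaled_unit 2 i \in C0 n.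
Proof.
rewrite inE; apply/or3P/Or33/existsP; exists i; apply/existsP; exists i.
by rewrite leqnn; apply/forallP => l; rewrite scaled_unitE ?muln2 ?addnn.
Qed.

Lemma indicator_C0 a b : a != b -> indicator [set a; b] \in C0 n.
Proof.
wlog ab : a b / a <= b => [W a_b|a_b].
  by case: (leqP a b) => [/W|/ltnW /W]; rewrite 1?setUC; apply; rewrite // eq_sym.
rewrite inE; apply/or3P/Or33/existsP; exists a; apply/existsP; exists b.
rewrite ab; apply/forallP => l; rewrite indicatorE !inE.
case: (l =P a) => [la|_]; case: (l =P b) => [lb|_] //.
by move: a_b; rewrite -la -lb eqxx.
Qed.

Lemma mixed_sub_C0 : mixed \subset C0 n.
Proof.
apply/subsetP => v /imsetP [A]; rewrite inE => /cards2P [a [b [ab ->]]] ->.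
exact: indicator_C0.
Qed.

Lemma card_mixed : #|mixed| = 'C(n, 2).
Proof. by rewrite card_imset ?card_draws ?card_ord //; apply: indicator_inj. Qed.

Lemma card_C0_ge : 'C(n, 2) <= #|C0 n|.
Proof. by rewrite -card_mixed subset_leq_card ?mixed_sub_C0. Qed.

Lemma pure_sub : pure \subset
  vec (fun=> 0) |: [set scaled_unit 1 i | i : 'I_n] :|: [set scaled_unit 2 i | i : 'I_n].
Proof.
apply/subsetP => v; rewrite !inE.
case/andP=> v_mixed /or3P [|/existsP [i]|/existsP [i /existsP [j]]].
- by move=> /forallP v0; rewrite (vec_eq (fun l => eqP (v0 l))) eqxx.
- move=> /forallP vi; apply/orP; left; apply/orP; right; apply/imsetP; exists i => //.
  by apply: vec_eq => l; rewrite (eqP (vi l)) muln1.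
case/andP=> _ /forallP; case: (eqVneq i j) => [<-|ij] vij.
  apply/orP; right; apply/imsetP; exists i => //; apply: vec_eq => l.
  by rewrite (eqP (vij l)) addnn -muln2.
case/imsetP: v_mixed; exists [set i; j]; first by rewrite inE cards2 ij.
apply: vec_eq => l; rewrite (eqP (vij l)) !inE.
by case: (l =P i) => [->|]; rewrite ?(negPf ij).
Qed.

Lemma card_pure : #|pure| <= 2 * n + 1.
Proof.
apply: leq_trans (subset_leq_card pure_sub) _.
apply: leq_trans (leq_card_setU _ _) _; rewrite cardsU1.
have card_units c : #|[set scaled_unit c i | i : 'I_n]| <= n.
  exact: leq_trans (leq_imset_card _ _) (eq_leq (card_ord n)).
by apply: leq_trans (leq_add (leq_add (leq_b1 _) (card_units 1)) (card_units 2)) _; lia.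
Qed.

Definition good_edge (e : {set vert n}) :=
  [forall y in e, forall y' in e, (y != y') ==> (#|[set i | y i != y' i]| == 4)].

Definition bad_edges := [set e in pairs n | ~~ good_edge e].

Lemma card_indicator_diff (A B : {set 'I_n}) : #|A| = 2 -> #|B| = 2 -> [disjoint A & B] ->
  #|[set i | indicator A i != indicator B i]| = 4.
Proof.
move=> A2 B2 /disjoint_setI0 AB.
suff -> : [set i | indicator A i != indicator B i] = A :|: B.
  by rewrite cardsU AB cards0 A2 B2.
apply/setP => i; move/setP: AB => /(_ i).
rewrite !inE -(inj_eq val_inj) /= !indicatorE.
by case: (i \in A); case: (i \in B).
Qed.

Lemma good_edge_indicator (A B : {set 'I_n}) :
  #|A| = 2 -> #|B| = 2 -> [disjoint A & B] -> good_edge [set indicator A; indicator B].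
Proof.
move=> A2 B2 AB; have BA : [disjoint B & A] by rewrite disjoint_sym.
apply/forall_inP => y /set2P [] ->; apply/forall_inP => y' /set2P [] -> /=;
  by rewrite ?eqxx // card_indicator_diff ?implybT.
Qed.

Lemma bad_edges_sub : bad_edges \subset
  [set [set v.1; v.2] | v in setX pure (C0 n)] :|:
  [set [set indicator [set t.1.1; t.1.2]; indicator [set t.1.1; t.2]] | t : 'I_n * 'I_n * 'I_n].
Proof.
apply/subsetP => e; rewrite !inE => /andP [/andP [/subsetP eC0 /cards2P [x [y [_ de]]]]].
have [xC yC] : x \in C0 n /\ y \in C0 n by rewrite !eC0 // de !inE eqxx ?orbT.
have [x_mixed|x_pure] := boolP (x \in mixed); last first.
  move=> _; apply/orP; left; apply/imsetP; exists (x, y) => //.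
  by rewrite in_setX in_setD x_pure xC yC.
have [y_mixed|y_pure] := boolP (y \in mixed); last first.
  move=> _; apply/orP; left; apply/imsetP; exists (y, x); last by rewrite de setUC.
  by rewrite in_setX in_setD y_pure xC yC.
case/imsetP: x_mixed => A; rewrite inE => /eqP A2 dx.
case/imsetP: y_mixed => B; rewrite inE => /eqP B2 dy.
rewrite de dx dy; have [AB|] := boolP [disjoint A & B]; first by rewrite good_edge_indicator.
rewrite -setI_eq0 => /set0Pn [a]; rewrite inE => /andP [aA aB] _.
have [b _ dA] := card2_set2 A2 aA; have [c _ dB] := card2_set2 B2 aB.
by apply/orP; right; apply/imsetP; exists (a, b, c); rewrite // -dA -dB.
Qed.

Lemma card_bad_edges : #|bad_edges| <= (2 * n + 1) * #|C0 n| + n * n * n.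
Proof.
apply: leq_trans (subset_leq_card bad_edges_sub) _.
apply: leq_trans (leq_card_setU _ _) (leq_add _ _).
  by apply: leq_trans (leq_imset_card _ _) _; rewrite cardsX leq_mul2r card_pure orbT.
by apply: leq_trans (leq_imset_card _ _) _; rewrite !card_prod !card_ord.
Qed.

End Complexes.

Lemma bin2_double m : 'C(m, 2) * 2 + m = m * m.
Proof. by rewrite bin_ffact ffactnS ffactn1; case: m => // m; rewrite mulnS addnC. Qed.

Lemma bad_edges_arith n c b : 20 <= n -> 'C(n, 2) <= c ->
  b <= (2 * n + 1) * c + n * n * n -> b * n <= 21 * 'C(c, 2).
Proof.
move=> n20 nc bc; have := bin2_double n; have := bin2_double c.
set m := n * n; set Q := 'C(c, 2) => Qc Nn.
apply: leq_trans (leq_mul bc (leqnn n)) _.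
have -> : ((2 * n + 1) * c + n * n * n) * n = 2 * (m * c) + n * c + m * m by rewrite /m; ring.
have mn : 20 * n <= m by rewrite leq_mul2r n20 orbT.
have mc : 19 * m <= 40 * c by lia.
have nc' : 19 * n <= 2 * c by lia.
have c190 : 190 <= c by lia.
have := leq_mul mc (leqnn c); have := leq_mul mc (leqnn m).
have := leq_mul nc' (leqnn c); have := leq_mul c190 (leqnn c).
rewrite [m * c]mulnC; lia.
Qed.

Lemma bad_edges_ratio n : 20 <= n -> #|bad_edges n| * n <= 21 * #|pairs n|.
Proof.
move=> n20; rewrite /pairs cards_draws.
exact: bad_edges_arith n20 (card_C0_ge n) (card_bad_edges n).
Qed.

Lemma not_eventA_bad n (E : {set {set vert n}}) : E \subset pairs n ->
  ~~ eventA E -> E :&: bad_edges n != set0.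
Proof.
move=> /subsetP EP /forall_inPn [e eE bad_e]; apply/set0Pn; exists e.
by rewrite in_setI eE in_set EP.
Qed.

Definition unit_pair n (i : 'I_n) := [set scaled_unit 1 i; scaled_unit 2 i].

Lemma unit_pair_support n (i l : 'I_n) v :
  v \in unit_pair i -> (v l != 0 :> nat) = (l == i).
Proof. by case/set2P=> ->; rewrite scaled_unitE //; case: (l == i). Qed.

Lemma unit_pair_edge n (i : 'I_n) : unit_pair i \in edges (C0 n).
Proof.
rewrite inE cards2 (_ : _ != _) ?andbT.
  by apply/subsetP => v /set2P [] ->; rewrite ?unit_C0 ?double_unit_C0.
by apply/eqP => /(congr1 (fun v : vert n => v i : nat)); rewrite !scaled_unitE ?eqxx.
Qed.

Lemma unit_pair_meet n (i j : 'I_n) v : v \in unit_pair i -> v \in unit_pair j -> i = j.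
Proof.
by move=> vi vj; apply/eqP; rewrite -(unit_pair_support i vj) (unit_pair_support i vi).
Qed.

Lemma kmatchings_gt0 n k : k <= n -> 0 < #|kmatchings (C0 n) k|.
Proof.
move=> kn; pose E := [set unit_pair (widen_ord kn j) | j : 'I_k].
have inj_pair : injective (fun j : 'I_k => unit_pair (widen_ord kn j)).
  move=> j j' /= jj'; apply/val_inj/(congr1 val (_ : widen_ord kn j = widen_ord kn j')).
  by apply: (unit_pair_meet (set21 _ _)); rewrite -jj'; apply: set21.
apply/card_gt0P; exists E; rewrite !inE card_imset // card_ord eqxx andbT.
apply/andP; split.
  by apply/subsetP => _ /imsetP [j _ ->]; apply: unit_pair_edge.
apply/forall_inP => _ /imsetP [j _ ->]; apply/forall_inP => _ /imsetP [j' _ ->].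
apply/implyP => ne; rewrite -setI_eq0; apply/set0Pn => -[v]; rewrite inE => /andP [vj vj'].
by move: ne; rewrite (unit_pair_meet vj vj') eqxx.
Qed.

Lemma ipaired_kmatchings n k :
  [set E in powerset (pairs n) | ipaired k E] = kmatchings (C0 n) k.
Proof.
apply/setP => E; rewrite !inE; case EP: (E \subset pairs n) => //=.
exact: ipaired_matching.
Qed.

Lemma card_kmatchings_bad n k : 20 <= n ->
  #|[set E in kmatchings (C0 n) k | E :&: bad_edges n != set0]| * n
    <= 21 * k * #|kmatchings (C0 n) k|.
Proof.
move=> n20; have n_gt0 : 0 < n by apply: leq_trans n20.
have P_gt0 : 0 < #|pairs n|.
  by apply/card_gt0P; exists (unit_pair (Ordinal n_gt0)); apply: unit_pair_edge.
rewrite -(leq_pmul2r P_gt0) mulnAC.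
have bad_sub : bad_edges n \subset edges (C0 n).
  by apply/subsetP => e; rewrite inE => /andP [].
apply: leq_trans (leq_mul (card_kmatchings_meet k bad_sub) (leqnn n)) _.
rewrite mulnAC; apply: leq_trans (leq_mul (bad_edges_ratio n20) (leqnn _)) _.
by apply: eq_leq; ring.
Qed.

Lemma card_kmatchings_eventA n k :
  #|kmatchings (C0 n) k| <=
    #|[set E in powerset (pairs n) | eventA E && ipaired k E]| +
    #|[set E in kmatchings (C0 n) k | E :&: bad_edges n != set0]|.
Proof.
apply: leq_trans (leq_card_setU _ _); apply/subset_leq_card/subsetP => E EM.
have := EM; rewrite -ipaired_kmatchings !inE => /andP [EP iE].
rewrite EP iE /=; have [//|/not_eventA_bad -> //] := boolP (eventA E).
Qed.

Local Open Scope ring_scope.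

Lemma ERprob_uniform (R : realFieldType) n k (p : R) (A : pred {set {set vert n}}) :
  (forall E : {set {set vert n}}, E \subset pairs n -> A E -> #|E| = k) ->
  ERprob p A =
    p ^+ k * (1 - p) ^+ (#|pairs n| - k) *+ #|[set E in powerset (pairs n) | A E]|.
Proof.
move=> cardA; rewrite /ERprob -sumr_const; apply: eq_big => [E|E]; first by rewrite inE.
by rewrite powersetE /erw => /andP [EP /(cardA _ EP) ->].
Qed.

Lemma ERcond_uniform (R : realFieldType) n k (p : R) (A B : pred {set {set vert n}}) :
  p != 0 -> p != 1 ->
  (forall E : {set {set vert n}}, E \subset pairs n -> B E -> #|E| = k) ->
  ERcond p A B = #|[set E in powerset (pairs n) | A E && B E]|%:R /
                 #|[set E in powerset (pairs n) | B E]|%:R.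
Proof.
move=> p0 p1 cardB; rewrite /ERcond (ERprob_uniform _ cardB).
rewrite (ERprob_uniform (k := k)); last by move=> E EP /andP [_]; apply: cardB.
set w := p ^+ k * _; rewrite -[w *+ _]mulr_natr -[w *+ #|_|]mulr_natr invfM mulrACA.
rewrite divff ?mul1r // mulf_neq0 ?expf_neq0 //.
by rewrite subr_eq0 eq_sym.
Qed.

Lemma ratio_lower_bound (R : realFieldType) (a m n K : nat) :
  (0 < m)%N -> (0 < n)%N -> (m * n <= a * n + K * m)%N ->
  1 - K%:R / n%:R <= a%:R / m%:R :> R.
Proof.
move=> m_gt0 n_gt0; rewrite -(ler_nat R) natrD !natrM => mn.
have n0 : n%:R != 0 :> R by rewrite pnatr_eq0 -lt0n.
rewrite ler_pdivlMr ?ltr0n //.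
have -> : (1 - K%:R / n%:R) * m%:R = (m%:R * n%:R - K%:R * m%:R) / n%:R :> R by field.
by rewrite ler_pdivrMr ?ltr0n //; lra.
Qed.

Theorem mainTheorem8 (R : realFieldType) (k : nat -> nat) (p : nat -> R)
  (hkpos : forall n, (0 < k n)%N)
  (hklim : forall eps : R, 0 < eps ->
     exists N : nat, forall n, (N <= n)%N -> (k n)%:R / n%:R < eps)
  (hp : forall n, 0 < p n < 1) :
  exists N : nat, forall n : nat, (N <= n)%N ->
    1 - 21%:R * (k n)%:R / n%:R <=
      ERcond (p n) (@eventA n) (@ipaired n (k n)).
Proof.
have [N1 kN1] := hklim 1 ltr01.
exists (maxn N1 20) => n; rewrite geq_max => /andP [nN1 n20].
have n_gt0 : (0 < n)%N by apply: leq_trans n20.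
have kn : (k n <= n)%N.
  by have := kN1 n nN1; rewrite ltr_pdivrMr ?ltr0n // mul1r ltr_nat => /ltnW.
have /andP [p0 p1] := hp n.
rewrite (ERcond_uniform (k := k n)) ?(gt_eqF p0) ?(lt_eqF p1) //; last first.
  by move=> E EP; rewrite ipaired_matching // => /andP [_ /eqP].
rewrite ipaired_kmatchings -natrM; apply: ratio_lower_bound (kmatchings_gt0 kn) n_gt0 _.
apply: leq_trans (leq_mul (card_kmatchings_eventA n (k n)) (leqnn n)) _.
by rewrite mulnDl leq_add2l card_kmatchings_bad.
Qed.
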